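(* Let $G$ be a finite connected interval graph and $z$ any vertex of $G$. Then $\mathrm{imp}(G)\ge \mathrm{wt}(z)$.
   Context: A finite simple graph $G=(V,E)$ is an interval graph iff there is a representation $\alpha: v\mapsto I_v$ of the vertices by (closed, bounded) intervals of the real line such that $vw\in E$ iff $I_v\cap I_w\neq\emptyset$. For a representation $\alpha$ and a vertex $z$, the impropriety $\mathrm{imp}_\alpha(z)$ is the number of representing intervals $I_w$, $w\neq z$, with $I_w\subseteq I_z$. The impropriety $\mathrm{imp}(\alpha)$ is $\max_z \mathrm{imp}_\alpha(z)$, and $\mathrm{imp}(G)$ is the minimum of $\mathrm{imp}(\alpha)$ over all interval representations $\alpha$ of $G$. A local component at $z$ is a connected component of $G\setminus\{z\}$; it is exterior iff it contains a vertex not adjacent to $z$ (there are at most two exterior local components at any vertex of an interval graph). If $z$ has $n$ local components, the weight $\mathrm{wt}(z)$ is the sum of the $n-2$ smallest orders (numbers of vertices) among the non-exterior local components at $z$ (an empty sum, i.e. $0$, if $n\le 2$). *)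

From Stdlib Require Import Reals ClassicalEpsilon.
From mathcomp Require Import all_boot.

Set Implicit Arguments.
Unset Strict Implicit.
Unset Printing Implicit Defensive.

Definition pb (P : Prop) : bool :=
  if excluded_middle_informative P then true else false.

(* A closed bounded interval [a,b] of the real line is encoded by its pair
   of endpoints (a,b); it is required that a <= b (see [is_representation]). *)
Definition interval := (R * R)%type.

Definition in_interval (x : R) (I : interval) : Prop :=
  Rle I.1 x /\ Rle x I.2.

Definition intervals_meet (I J : interval) : Prop :=
  exists x : R, in_interval x I /\ in_interval x J.

Definition interval_subset (I J : interval) : Prop :=
  forall x : R, in_interval x I -> in_interval x J.

Definition simple_graph (V : finType) (e : rel V) : Prop :=
  symmetric e /\ irreflexive e.

Definition connected_graph (V : finType) (e : rel V) : Prop :=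
  forall x y : V, connect e x y.

Definition is_representation (V : finType) (e : rel V) (alpha : V -> interval)
  : Prop :=
  (forall v, Rle (alpha v).1 (alpha v).2) /\
  (forall v w, v != w -> (e v w <-> intervals_meet (alpha v) (alpha w))).

Definition is_interval_graph (V : finType) (e : rel V) : Prop :=
  exists alpha : V -> interval, is_representation e alpha.

Definition imp_at (V : finType) (alpha : V -> interval) (z : V) : nat :=
  #|[set w | (w != z) && pb (interval_subset (alpha w) (alpha z))]|.

Definition imp_rep (V : finType) (alpha : V -> interval) : nat :=
  \max_(z : V) imp_at alpha z.

Definition del_rel (V : finType) (e : rel V) (z : V) : rel V :=
  [rel x y | [&& x != z, y != z & e x y]].

Definition local_component (V : finType) (e : rel V) (z x : V) : {set V} :=
  [set y | (y != z) && connect (del_rel e z) x y].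

Definition local_components (V : finType) (e : rel V) (z : V) : {set {set V}} :=
  [set local_component e z x | x in [set~ z]].

Definition exterior (V : finType) (e : rel V) (z : V) (C : {set V}) : bool :=
  [exists y in C, ~~ e z y].

(* wt(z): sum of the (n-2) smallest orders among the non-exterior local
   components, n = number of local components (empty sum if n <= 2). *)
Definition wt (V : finType) (e : rel V) (z : V) : nat :=
  let n := #|local_components e z| in
  let nonext : seq {set V} :=
    [seq C <- enum (local_components e z) | ~~ exterior e z C] in
  let orders := sort leq (map (fun C : {set V} => #|C|) nonext) in
  sumn (take (n - 2) orders).

(* Call a local component at z *inside* if all its intervals lie within I_z.
   - An inside component is not exterior: each of its intervals meets I_z.
   - A component that is not inside has an interval sticking out of I_z, to
     the left or to the right.  Since the component is connected and reaches
     a neighbour of z, its intervals then cover the left (resp. right)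
     endpoint of I_z.  Intervals through a common point pairwise meet, so at
     most one component covers a given point.  Hence at most two components
     are not inside, i.e. at least n - 2 components are inside.
   - The inside components are disjoint and all their vertices are counted by
     imp_alpha(z), so their total order is at most imp(alpha).
   - Finally, a purely combinatorial lemma: the sum of the n - 2 smallest
     orders of non-exterior components is bounded by the total order of any
     family of at least n - 2 non-exterior components. *)
From Stdlib Require Import Reals Lra ClassicalEpsilon.
From mathcomp Require Import all_boot zify.

Set Implicit Arguments.
Unset Strict Implicit.
Unset Printing Implicit Defensive.

Lemma sumn_take_sorted_le (s u w : seq nat) (k : nat) :
  sorted leq s -> perm_eq s (u ++ w) -> k <= size u ->
  sumn (take k s) <= sumn u.
Proof.
elim: s u w k => [|x s IH] u w [|k] //= s_sorted s_uw k_le.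
have x_min : all (leq x) s := order_path_min leq_trans s_sorted.
have {}s_sorted : sorted leq s := path_sorted s_sorted.
have x_uw : x \in u ++ w by rewrite -(perm_mem s_uw) mem_head.
case x_u: (x \in u).
-
  have s_perm : perm_eq s (rem x u ++ w).
    rewrite -(perm_cons x); apply: perm_trans s_uw _.
    by rewrite -cat_cons perm_cat2r perm_to_rem.
  have u_perm := perm_to_rem x_u.
  rewrite (perm_size u_perm) /= in k_le.
  by rewrite (perm_sumn u_perm) /= leq_add2l (IH _ _ k s_sorted s_perm).
- (* x is not chosen: trade it for the first chosen entry y >= x *)
  have {x_uw} x_w : x \in w by rewrite mem_cat x_u in x_uw.
  case: u s_uw k_le x_u => [|y u] //= s_uw k_le _.
  have s_perm : perm_eq s (u ++ y :: rem x w).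
    rewrite -(perm_cons x); apply: perm_trans s_uw _; apply/permP => a.
    by rewrite /= !count_cat (permP (perm_to_rem x_w)) /=; lia.
  have y_s : y \in s by rewrite (perm_mem s_perm) mem_cat mem_head orbT.
  have := IH _ _ k s_sorted s_perm k_le.
  have := allP x_min y y_s; lia.
Qed.

Lemma wt_le_sum_family (V : finType) (e : rel V) (z : V) (A : {set {set V}}) :
  A \subset local_components e z ->
  {in A, forall C, ~~ exterior e z C} ->
  #|local_components e z| - 2 <= #|A| ->
  wt e z <= \sum_(C in A) #|C|.
Proof.
move=> A_sub A_nonext A_big; rewrite /wt.
set S := local_components e z.
set nonext := [seq C <- enum S | ~~ exterior e z C].
have A_seq : [seq C <- nonext | C \in A] = [seq C <- enum S | C \in A].
  rewrite -filter_predI; apply: eq_in_filter => C _ /=.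
  by case: (boolP (C \in A)) => [/A_nonext -> | _]; rewrite ?andbF.
have size_A : size [seq C <- enum S | C \in A] = #|A|.
  rewrite -(card_uniqP (filter_uniq _ (enum_uniq _))).
  apply: eq_card => C; rewrite mem_filter mem_enum.
  by rewrite andb_idr // => /(subsetP A_sub).
have orders_perm : perm_eq (sort leq [seq #|C| | C : {set V} <- nonext])
    ([seq #|C| | C : {set V} <- [seq C <- nonext | C \in A]] ++
     [seq #|C| | C : {set V} <- [seq C <- nonext | C \notin A]]).
  by rewrite perm_sort -map_cat perm_map // perm_sym perm_filterC.
have orders_sorted := sort_sorted leq_total [seq #|C| | C : {set V} <- nonext].
apply: leq_trans (sumn_take_sorted_le orders_sorted orders_perm _) _.
  by rewrite size_map A_seq size_A.
rewrite A_seq sumnE big_map big_filter big_enum_cond.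
by apply: eq_leq; apply: eq_bigl => C; apply: andb_idl => /(subsetP A_sub).
Qed.

Lemma pbP (P : Prop) : reflect P (pb P).
Proof. by rewrite /pb; case: excluded_middle_informative => h; constructor. Qed.

Lemma path_covers_point (V : finType) (r : rel V) (alpha : V -> interval) :
  (forall u v, r u v -> intervals_meet (alpha u) (alpha v)) ->
  forall (x y : V) (p : R), connect r x y ->
  Rle (alpha x).1 p -> Rle p (alpha y).2 ->
  exists2 u, connect r x u & in_interval p (alpha u).
Proof.
move=> r_meet x y p /connectP[s]; elim: s x => [|a s IH] x /=.
  by move=> _ -> p_ge p_le; exists x; [exact: connect0 | split].
case/andP=> xa a_s y_last p_ge p_le.
case: (Rle_lt_dec p (alpha x).2) => [p_x | x_p]; first by exists x.
have [q [[q_a1 q_a2] [q_x1 q_x2]]] := r_meet _ _ xa.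
have [u au p_u] := IH a a_s y_last ltac:(lra) p_le.
by exists u => //; apply: connect_trans (connect1 xa) au.
Qed.

Section LocalComponents.

Variables (V : finType) (e : rel V) (z : V).
Hypothesis e_sym : symmetric e.

Local Notation comp := (local_component e z).
Local Notation comps := (local_components e z).

Lemma del_rel_sym : symmetric (del_rel e z).
Proof. by move=> x y; rewrite /del_rel /= e_sym andbCA. Qed.

Lemma connect_del_neq (x y : V) :
  connect (del_rel e z) x y -> x != z -> y != z.
Proof.
move/connectP=> [p]; elim: p x => [|a p IH] x /=; first by move=> _ ->.
by case/andP=> /and3P[_ a_z _] a_p y_last _; apply: IH a_p y_last a_z.
Qed.

Lemma local_component_eq (x x' y : V) :
  y \in comp x -> y \in comp x' -> comp x = comp x'.
Proof.
rewrite !inE => /andP[_ xy] /andP[_ x'y].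
have csym := sym_connect_sym del_rel_sym.
have xx' : connect (del_rel e z) x x'.
  by apply: connect_trans xy _; rewrite csym.
apply/setP=> t; rewrite !inE; congr andb; apply/idP/idP => [x't | xt].
  by apply: connect_trans x't; rewrite csym.
exact: connect_trans xx' xt.
Qed.

Lemma local_components_trivIset : trivIset comps.
Proof.
apply/trivIsetP => _ _ /imsetP[x _ ->] /imsetP[x' _ ->] neq.
rewrite -setI_eq0; apply/eqP/setP => y; rewrite in_setI in_set0.
apply/negbTE/andP => -[yx yx'].
by rewrite (local_component_eq yx yx') eqxx in neq.
Qed.

Lemma mem_local_components (C : {set V}) :
  C \in comps -> exists2 x, x != z & C = comp x.
Proof. by case/imsetP => x; rewrite !inE => xz ->; exists x. Qed.

Lemma local_component_neq (C : {set V}) (y : V) :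
  C \in comps -> y \in C -> y != z.
Proof. by case/mem_local_components=> x _ ->; rewrite inE => /andP[]. Qed.

Hypothesis e_conn : connected_graph e.

Lemma local_component_adj (C : {set V}) :
  C \in comps -> exists2 c, c \in C & e c z.
Proof.
case/mem_local_components=> x x_z ->.
have /connectP[p] := e_conn x z.
elim: p x x_z => [|a p IH] x x_z /=.
  by move=> _ zx; rewrite zx eqxx in x_z.
case/andP=> xa a_p z_last.
case: (eqVneq a z) => [a_z | a_z].
  by exists x; [rewrite inE x_z connect0 | rewrite -a_z].
have [c c_a c_z] := IH a a_z a_p z_last; exists c => //.
have xa' : del_rel e z x a by rewrite /del_rel /= x_z a_z xa.
have a_x : a \in comp x by rewrite inE a_z (connect1 xa').
have a_a : a \in comp a by rewrite inE a_z connect0.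
by rewrite -(local_component_eq a_a a_x).
Qed.

Section IntervalRepresentation.

Variable alpha : V -> interval.
Hypothesis e_irr : irreflexive e.
Hypothesis alpha_rep : is_representation e alpha.

Lemma adj_meet (v w : V) : e v w -> intervals_meet (alpha v) (alpha w).
Proof.
move=> vw; have v_w : v != w by apply: contraTneq vw => ->; rewrite e_irr.
exact/(alpha_rep.2 _ _ v_w).
Qed.

Lemma component_covers_point (C : {set V}) (u v : V) (p : R) :
  C \in comps -> u \in C -> v \in C ->
  Rle (alpha u).1 p -> Rle p (alpha v).2 ->
  exists2 w, w \in C & in_interval p (alpha w).
Proof.
case/mem_local_components=> x _ ->; rewrite !inE.
move=> /andP[u_z xu] /andP[_ xv] u_p p_v.
have uv : connect (del_rel e z) u v.
  by apply: connect_trans _ xv; rewrite (sym_connect_sym del_rel_sym).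
have del_meet a b : del_rel e z a b -> intervals_meet (alpha a) (alpha b).
  by case/and3P=> _ _; apply: adj_meet.
have [w uw p_w] := path_covers_point del_meet uv u_p p_v.
by exists w => //; rewrite inE (connect_del_neq uw u_z) (connect_trans xu uw).
Qed.

(* Intervals through a common point pairwise meet, so at most one local
   component has an interval through a given point. *)
Lemma component_at_point_eq (C D : {set V}) (u v : V) (p : R) :
  C \in comps -> D \in comps -> u \in C -> v \in D ->
  in_interval p (alpha u) -> in_interval p (alpha v) -> C = D.
Proof.
move=> /mem_local_components[x _ ->] /mem_local_components[y _ ->] uC vD pu pv.
case: (eqVneq u v) => [u_eq_v | u_v].
  by rewrite -u_eq_v in vD; apply: local_component_eq uC vD.
have uv : e u v by apply/(alpha_rep.2 _ _ u_v); exists p.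
move: (uC) (vD); rewrite !inE => /andP[u_z xu] /andP[v_z _].
have vC : v \in comp x.
  by rewrite inE v_z (connect_trans xu) // connect1 // /del_rel /= u_z v_z uv.
exact: local_component_eq vC vD.
Qed.

Definition inside (C : {set V}) : bool :=
  [forall y in C, pb (interval_subset (alpha y) (alpha z))].

Definition crosses (p : R) (C : {set V}) : bool :=
  [exists w in C, pb (in_interval p (alpha w))].

Lemma card_crosses_le1 (p : R) : #|[set C in comps | crosses p C]| <= 1.
Proof.
apply/card_le1_eqP => C D; rewrite !inE.
case/andP=> CS /existsP[u /andP[uC /pbP pu]].
case/andP=> DS /existsP[v /andP[vD /pbP pv]].
exact: component_at_point_eq DS CS vD uC pv pu.
Qed.

(* A component not inside z sticks out of I_z on one side; being connected
   to a neighbour of z, it then covers the corresponding endpoint of I_z. *)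
Lemma not_inside_crosses (C : {set V}) :
  C \in comps -> ~~ inside C ->
  crosses (alpha z).1 C || crosses (alpha z).2 C.
Proof.
move=> CS /forallPn[y]; rewrite negb_imply => /andP[yC /pbP y_out].
have [c cC cz] := local_component_adj CS.
have [q [[q_c1 q_c2] [q_z1 q_z2]]] := adj_meet cz.
have crossing p u v : u \in C -> v \in C ->
    Rle (alpha u).1 p -> Rle p (alpha v).2 -> crosses p C.
  move=> uC vC u_p p_v.
  have [w wC pw] := component_covers_point CS uC vC u_p p_v.
  by apply/existsP; exists w; rewrite wC; apply/pbP.
case: (Rlt_le_dec (alpha y).1 (alpha z).1) => [y_left | z_y1].
  by rewrite (crossing (alpha z).1 y c) //; lra.
case: (Rlt_le_dec (alpha z).2 (alpha y).2) => [y_right | y_z2].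
  by rewrite (crossing (alpha z).2 c y) ?orbT //; lra.
by exfalso; apply: y_out => t [t1 t2]; split; lra.
Qed.

Lemma card_inside : #|comps| - 2 <= #|[set C in comps | inside C]|.
Proof.
set In := [set C in comps | inside C].
have out_sub : comps :\: In \subset
    [set C in comps | crosses (alpha z).1 C] :|:
    [set C in comps | crosses (alpha z).2 C].
  apply/subsetP => C; rewrite !inE => /andP[/nandP[CS | C_out] CS'].
    by rewrite CS' in CS.
  by rewrite -andb_orr CS' not_inside_crosses.
have In_sub : In \subset comps by apply/subsetP => C; rewrite inE => /andP[].
have := cardsID In comps; rewrite (setIidPr In_sub).
have := subset_leq_card out_sub; rewrite cardsU.
have := card_crosses_le1 (alpha z).1; have := card_crosses_le1 (alpha z).2.
lia.
Qed.

(* Every interval of an inside component meets I_z, so it is not exterior. *)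
Lemma inside_nonexterior (C : {set V}) :
  C \in comps -> inside C -> ~~ exterior e z C.
Proof.
move=> CS /forallP C_in; apply/existsP => -[y /andP[yC /negP zy]]; apply: zy.
have y_z : y != z := local_component_neq CS yC.
have /pbP y_sub := implyP (C_in y) yC.
have y1 : in_interval (alpha y).1 (alpha y).
  by split; [apply: Rle_refl | apply: alpha_rep.1].
rewrite eq_sym in y_z; apply/(alpha_rep.2 _ _ y_z).
by exists (alpha y).1; split; [apply: y_sub |].
Qed.

(* The inside components are disjoint, and each of their vertices has its
   interval inside I_z, so they are all counted by imp_alpha(z). *)
Lemma sum_inside_le_imp :
  \sum_(C in [set C in comps | inside C]) #|C| <= imp_at alpha z.
Proof.
set In := [set C in comps | inside C].
have In_sub : In \subset comps by apply/subsetP => C; rewrite inE => /andP[].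
rewrite (eqP (trivIsetS In_sub local_components_trivIset)) /imp_at.
apply/subset_leq_card/subsetP => y /bigcupP[C C_In yC].
case/setIdP: C_In => CS C_in.
rewrite inE (local_component_neq CS yC).
by move/forallP: C_in => /(_ y); rewrite yC.
Qed.

End IntervalRepresentation.

End LocalComponents.

Theorem theorem2p2 (V : finType) (e : rel V) (z : V) :
  simple_graph e ->
  connected_graph e ->
  is_interval_graph e ->
  forall alpha : V -> interval, is_representation e alpha ->
  wt e z <= imp_rep alpha.
Proof.
move=> [e_sym e_irr] e_conn _ alpha alpha_rep.
set In := [set C in local_components e z | inside z alpha C].
have In_sub : In \subset local_components e z.
  by apply/subsetP => C; rewrite inE => /andP[].
have In_nonext : {in In, forall C, ~~ exterior e z C}.
  move=> C; rewrite inE => /andP[CS C_in].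
  exact: (inside_nonexterior (z := z)) C_in.
have In_big := card_inside z e_sym e_conn e_irr alpha_rep.
apply: leq_trans (wt_le_sum_family In_sub In_nonext In_big) _.
exact: leq_trans (sum_inside_le_imp z e_sym alpha) (leq_bigmax _).
Qed.
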